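(* Fix $J\in\mathbb Z_{>0}$, $i_1,j_1,i_2\in\mathbb Z_{\ge0}$ and $j_2\in\{0,\dots,J\}$. Then $$W_J(i_1,j_1;i_2,j_2\mid v,\lambda)=\sum_{k=0}^J W_{j_2}\big(i_1,k;\,i_1+k-j_2,\,j_2\mid v,\,\lambda-2\eta(J-2j_1-j_2+2k)\big)\,W_{J-j_2}\big(i_1+k-j_2,\,j_1-k;\,i_2,\,0\mid v+2\eta j_2,\,\lambda\big),$$ with the conventions that $W_0(i,0;i,0\mid\cdot)=1$, $W_0(i,j;i',j')=0$ if $(j,j')\neq(0,0)$ or $i\ne i'$, and any weight with a negative argument is $0$.
   Context: Fix $\eta,\tau\in\mathbb C$, $\operatorname{Im}\tau>0$. $f(z)$ denotes either $\theta(z)=-\sum_{j\in\mathbb Z}\exp\big(\pi\mathbf i\tau(j+\tfrac12)^2+2\pi\mathbf i(j+\tfrac12)(z+\tfrac12)\big)$ or $\sin(\pi z)$. Unfused weights ($k\ge0$): $W_1(k,0;k,0\mid v,\lambda,\Lambda)=\frac{f(\eta(\Lambda-2k)-v)f(\lambda+2k\eta)}{f(\eta\Lambda-v)f(\lambda)}$, $W_1(k,1;k+1,0\mid\cdot)=\frac{f(v+\lambda+\eta(2k+2-\Lambda))f(2\eta)}{f(\eta\Lambda-v)f(\lambda)}$, $W_1(k,0;k-1,1\mid\cdot)=\frac{f(\lambda-v+\eta(2k-2-\Lambda))f(2\eta(\Lambda+1-k))f(2k\eta)}{f(\eta\Lambda-v)f(\lambda)f(2\eta)}$ ($k\ge1$),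 $W_1(k,1;k,1\mid\cdot)=\frac{f(\eta(2k-\Lambda)-v)f(\lambda+2\eta(k-\Lambda))}{f(\eta\Lambda-v)f(\lambda)}$, and $0$ otherwise. Column weights: for $\mathcal J_1=(j_{1,k})_{k=1}^J,\mathcal J_2=(j_{2,k})_{k=1}^J\in\{0,1\}^J$, $i^{(1)}=i_1$, $i^{(k+1)}=i^{(k)}+j_{1,k}-j_{2,k}$, $\Phi_J=\lambda$, $\Phi_k=\Phi_{k+1}\mp2\eta$ according as $j_{1,k+1}=0$ or $1$; $W_J(i_1,\mathcal J_1;i_2,\mathcal J_2\mid v,\lambda)=\prod_{k=1}^JW_1(i^{(k)},j_{1,k};i^{(k+1)},j_{2,k}\mid v+2\eta(k-1),\Phi_k,\Lambda)$ if all $i^{(k)}\ge0$ and $i^{(J+1)}=i_2$, else $0$. Fused weight: $W_J(i_1,j_1;i_2,j_2\mid v,\lambda)=\sum_{|\mathcal J_1|=j_1}W_J(i_1,\mathcal J_1;i_2,\mathcal K\mid v,\lambda)$ for any $\mathcal K$ with $|\mathcal K|=j_2$ (independent of $\mathcal K$); $\Lambda$ is suppressed. *)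

From Stdlib Require Import Reals ZArith List Bool ClassicalEpsilon.
Import ListNotations.
Open Scope bool_scope.
Open Scope R_scope.

Record CC := mkC { re : R; im : R }.
Definition CR (r : R) : CC := mkC r 0.
Definition CZ (z : Z) : CC := CR (IZR z).
Definition C0 : CC := CR 0.
Definition C1 : CC := CR 1.
Definition Ci : CC := mkC 0 1.
Definition Cadd (x y : CC) : CC := mkC (re x + re y) (im x + im y).
Definition Copp (x : CC) : CC := mkC (- re x) (- im x).
Definition Csub (x y : CC) : CC := Cadd x (Copp y).
Definition Cmul (x y : CC) : CC :=
  mkC (re x * re y - im x * im y) (re x * im y + im x * re y).
Definition Cinv (x : CC) : CC :=
  let d := re x * re x + im x * im x in mkC (re x / d) (- im x / d).
Definition Cdiv (x y : CC) : CC := Cmul x (Cinv y).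
Definition Cexp (z : CC) : CC := mkC (exp (re z) * cos (im z)) (exp (re z) * sin (im z)).
Definition CPI : CC := CR PI.

Declare Scope C_scope.
Delimit Scope C_scope with CC.
Infix "+" := Cadd : C_scope.
Infix "-" := Csub : C_scope.
Infix "*" := Cmul : C_scope.
Infix "/" := Cdiv : C_scope.
Notation "- x" := (Copp x) : C_scope.

Fixpoint Csum (l : list CC) : CC :=
  match l with [] => C0 | x :: t => Cadd x (Csum t) end.

Definition Ccv (u : nat -> CC) (l : CC) : Prop :=
  Un_cv (fun n => re (u n)) (re l) /\ Un_cv (fun n => im (u n)) (im l).

Definition Cpartial (a : Z -> CC) (N : nat) : CC :=
  Csum (map (fun n => a (Z.of_nat n - Z.of_nat N)%Z) (seq 0 (2 * N + 1))).

(** sum over Z (the theta series converges absolutely, so the symmetric limit is its sum) *)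
Definition CsumZ (a : Z -> CC) : CC :=
  epsilon (inhabits C0) (fun s => Ccv (Cpartial a) s).

Definition sinpi (z : CC) : CC :=
  ((Cexp (Ci * CPI * z) - Cexp (- (Ci * CPI * z))) / (CZ 2 * Ci))%CC.

Definition half : CC := CR (1/2).
Definition theta (tau z : CC) : CC :=
  Copp (CsumZ (fun j =>
    let h := (CZ j + half)%CC in
    Cexp (CPI * Ci * tau * h * h + CZ 2 * CPI * Ci * h * (z + half))%CC)).

Open Scope C_scope.
Definition W1 (f : CC -> CC) (eta : CC) (i j i' j' : Z) (v lam Lam : CC) : CC :=
  let k := CZ i in
  let den := f (eta * Lam - v) * f lam in
  if (i <? 0)%Z then C0 else
  if (j =? 0)%Z && (j' =? 0)%Z && (i' =? i)%Z then
    f (eta * (Lam - CZ 2 * k) - v) * f (lam + CZ 2 * k * eta) / den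
  else if (j =? 1)%Z && (j' =? 0)%Z && (i' =? i + 1)%Z then
    f (v + lam + eta * (CZ 2 * k + CZ 2 - Lam)) * f (CZ 2 * eta) / den
  else if (j =? 0)%Z && (j' =? 1)%Z && (i' =? i - 1)%Z && (1 <=? i)%Z then
    f (lam - v + eta * (CZ 2 * k - CZ 2 - Lam)) * f (CZ 2 * eta * (Lam + C1 - k))
      * f (CZ 2 * k * eta) / (den * f (CZ 2 * eta))
  else if (j =? 1)%Z && (j' =? 1)%Z && (i' =? i)%Z then
    f (eta * (CZ 2 * k - Lam) - v) * f (lam + CZ 2 * eta * (k - Lam)) / den
  else C0.

(** Phi_k from the tail [j_{1,k+1}; ...; j_{1,J}]:
    Phi_J = lam, Phi_k = Phi_{k+1} -/+ 2 eta according as j_{1,k+1} = 0 / 1 *)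
Definition Phi (eta lam : CC) (tail : list Z) : CC :=
  fold_right (fun m acc => if (m =? 0)%Z then acc - CZ 2 * eta else acc + CZ 2 * eta)
    lam tail.

(** product over the column; returns (i^(J+1), product) *)
Fixpoint colW_aux (f : CC -> CC) (eta Lam : CC) (i : Z) (l1 l2 : list Z) (v lam : CC)
  : Z * CC :=
  match l1, l2 with
  | a :: t1, b :: t2 =>
      let i' := (i + a - b)%Z in
      let '(e, p) := colW_aux f eta Lam i' t1 t2 (v + CZ 2 * eta) lam in
      (e, W1 f eta i a i' b v (Phi eta lam t1) Lam * p)
  | _, _ => (i, C1)
  end.

(** column weight W_J(i1, J1; i2, J2 | v, lam) (J = length of the lists) *)
Definition colW (f : CC -> CC) (eta Lam : CC) (i1 : Z) (l1 : list Z) (i2 : Z) (l2 : list Z)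
    (v lam : CC) : CC :=
  if (i1 <? 0)%Z || (i2 <? 0)%Z then C0 else
  let '(e, p) := colW_aux f eta Lam i1 l1 l2 v lam in
  if (e =? i2)%Z then p else C0.

Fixpoint bits (n : nat) : list (list Z) :=
  match n with
  | O => [ [] ]
  | S n => map (cons 0%Z) (bits n) ++ map (cons 1%Z) (bits n)
  end.

Definition sumZ (l : list Z) : Z := fold_right Z.add 0%Z l.

Definition fusedWK (f : CC -> CC) (eta Lam : CC) (J : nat) (i1 j1 i2 : Z) (K : list Z)
    (v lam : CC) : CC :=
  Csum (map (fun l1 => colW f eta Lam i1 l1 i2 K v lam)
            (filter (fun l => (sumZ l =? j1)%Z) (bits J))).

(** fused weight W_J(i1, j1; i2, j2 | v, lam), using K = (1,..,1,0,..,0);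
    zero if j2 is outside {0..J} (negative-argument convention) *)
Definition fusedW (f : CC -> CC) (eta Lam : CC) (J : nat) (i1 j1 i2 j2 : Z) (v lam : CC) : CC :=
  if (j2 <? 0)%Z || (Z.of_nat J <? j2)%Z then C0 else
  fusedWK f eta Lam J i1 j1 i2
    (repeat 1%Z (Z.to_nat j2) ++ repeat 0%Z (J - Z.to_nat j2)) v lam.

(* Unfolding the fused weight row by row turns it into a recursion on the outgoing column K
   in which the dynamical parameter of a row only depends on the number of 1's entering below
   it.  This recursion is unchanged when two adjacent outgoing entries (1, 0) are exchanged
   into (0, 1): the coefficients of the three resulting terms (0, 1 or 2 incoming 1's) obey
   identities between products of two unfused weights, which all follow from an addition
   formula  f(s+d) f(s-d) = A(s) B(d) - B(s) A(d)  through the Pluecker relation of its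
   right-hand side.  Hence K can be sorted to 1^j2 0^(J-j2), and cutting the column between
   the two blocks gives the sum over the number k of 1's entering the upper block.
   sin(pi z) has the addition formula with A = sin(pi z)^2, B = 1; theta has it with A, B
   its even and odd parts, obtained by regrouping the absolutely convergent double series
   theta(s+d) theta(s-d) according to the parity of the sum of the two indices. *)

From Pilot Require Import Defs.
From Stdlib Require Import Reals ZArith List Lra Lia Psatz Bool Permutation FinFun ClassicalEpsilon.
(* Re-imported so that [C1] is [Defs.C1], not Stdlib's [Cos_rel.C1]. *)
Import Defs ListNotations.
Open Scope C_scope.

(** * The complex field *)

Lemma CC_ext (x y : CC) : re x = re y -> im x = im y -> x = y.
Proof. destruct x, y; simpl; intros; subst; reflexivity. Qed.

Lemma CC_ring : ring_theory C0 C1 Cadd Cmul Csub Copp (@eq CC).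
Proof.
  constructor; intros; apply CC_ext; unfold C0, C1, CR, Cadd, Cmul, Csub, Copp; simpl; ring.
Qed.

Lemma C1_neq_C0 : C1 <> C0.
Proof. intros E. apply R1_neq_R0. exact (f_equal re E). Qed.

Lemma CC_field : field_theory C0 C1 Cadd Cmul Csub Copp Cdiv Cinv (@eq CC).
Proof.
  constructor; [exact CC_ring | exact C1_neq_C0 | reflexivity |].
  intros x Hx.
  assert (Hd : (re x * re x + im x * im x <> 0)%R).
  { intros Hd. apply Hx. apply CC_ext; unfold C0, CR; simpl; nra. }
  apply CC_ext; unfold Cinv, Cmul, C1, CR; simpl; field; exact Hd.
Qed.

Lemma CZ_ring_morph : ring_morph C0 C1 Cadd Cmul Csub Copp (@eq CC)
  0%Z 1%Z Z.add Z.mul Z.sub Z.opp Z.eqb CZ.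
Proof.
  constructor; intros; apply CC_ext; unfold CZ, CR, Cadd, Cmul, Csub, Copp, C0, C1; simpl;
    rewrite ?plus_IZR, ?minus_IZR, ?mult_IZR, ?opp_IZR; try ring.
  apply Z.eqb_eq in H; subst; reflexivity.
Qed.

Ltac CZ_cst t :=
  match t with
  | CZ ?z => match isZcst z with true => z | _ => constr:(NotConstant) end
  | C0 => constr:(0%Z)
  | C1 => constr:(1%Z)
  | _ => constr:(NotConstant)
  end.

Add Field CC_field_tac : CC_field (morphism CZ_ring_morph, constants [CZ_cst]).

Lemma CZ_add a b : CZ (a + b) = CZ a + CZ b.
Proof. apply CC_ext; unfold CZ, CR, Cadd; simpl; [rewrite plus_IZR|]; ring. Qed.
Lemma CZ_mul a b : CZ (a * b) = CZ a * CZ b.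
Proof. apply CC_ext; unfold CZ, CR, Cmul; simpl; [rewrite mult_IZR|]; ring. Qed.
Lemma CZ_opp a : CZ (- a) = - CZ a.
Proof. apply CC_ext; unfold CZ, CR, Copp; simpl; [rewrite opp_IZR|]; ring. Qed.
Lemma CZ_sub a b : CZ (a - b) = CZ a - CZ b.
Proof. unfold Z.sub, Csub. rewrite CZ_add, CZ_opp. reflexivity. Qed.
Lemma CZ_1 : CZ 1 = C1.
Proof. reflexivity. Qed.

Lemma CC_eq_dec (x y : CC) : {x = y} + {x <> y}.
Proof.
  destruct x as [a b], y as [c d].
  destruct (Req_dec_T a c) as [<-|H1]; [destruct (Req_dec_T b d) as [<-|H2]|].
  - left; reflexivity.
  - right; intros E; injection E; auto.
  - right; intros E; injection E; auto.
Qed.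

Lemma Csub_eq0 a b : a - b = C0 -> a = b.
Proof. intros E. replace a with ((a - b) + b) by ring. rewrite E. ring. Qed.

Lemma Csqr_eq0 x : x * x = C0 -> x = C0.
Proof.
  intros E. destruct (CC_eq_dec x C0) as [|Hx]; auto.
  replace x with (x * x / x) by (field; auto). rewrite E. field; auto.
Qed.

(** * Finite sums *)

Lemma Csum_app l1 l2 : Csum (l1 ++ l2) = Csum l1 + Csum l2.
Proof. induction l1; simpl; [ring | rewrite IHl1; ring]. Qed.

Lemma Csum_perm (l l' : list CC) : Permutation l l' -> Csum l = Csum l'.
Proof. induction 1; simpl; try congruence. ring. Qed.

Lemma Csum_map_mull {A} (c : CC) (g : A -> CC) l :
  Csum (map (fun x => c * g x) l) = c * Csum (map g l).
Proof. induction l; simpl; [ring | rewrite IHl; ring]. Qed.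

Lemma Csum_map_add {A} (g h : A -> CC) l :
  Csum (map (fun x => g x + h x) l) = Csum (map g l) + Csum (map h l).
Proof. induction l; simpl; [ring | rewrite IHl; ring]. Qed.

Lemma Csum_map_opp {A} (g : A -> CC) l : Csum (map (fun x => - g x) l) = - Csum (map g l).
Proof. induction l; simpl; [ring | rewrite IHl; ring]. Qed.

Lemma Csum_map_ext_in {A} (g h : A -> CC) l :
  (forall x, In x l -> g x = h x) -> Csum (map g l) = Csum (map h l).
Proof. intros H; rewrite (map_ext_in g h l H); reflexivity. Qed.

Lemma Csum_map_eq0 {A} (g : A -> CC) l : (forall x, In x l -> g x = C0) -> Csum (map g l) = C0.
Proof. induction l; simpl; intros H; [reflexivity|]. rewrite H, IHl by auto. ring. Qed.

Lemma Csum_list_prod {A B} (a : A -> CC) (b : B -> CC) l1 l2 :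
  Csum (map (fun p => a (fst p) * b (snd p)) (list_prod l1 l2)) = Csum (map a l1) * Csum (map b l2).
Proof.
  induction l1; simpl; [ring|].
  rewrite map_app, Csum_app, IHl1, map_map, (Csum_map_mull (a a0) b). ring.
Qed.

Lemma seq_0_S n : seq 0 (S n) = 0%nat :: map S (seq 0 n).
Proof. simpl. rewrite seq_shift. reflexivity. Qed.

(** * The fused weight as a recursion on the outgoing column *)

Definition dshift (eta lam : CC) (z : Z) : CC := lam + CZ 2 * eta * CZ z.

Lemma dshift_dshift eta lam a b : dshift eta (dshift eta lam a) b = dshift eta lam (a + b).
Proof. unfold dshift. rewrite CZ_add. ring. Qed.

Ltac cz_ring := try unfold dshift; apply CC_ext; unfold Csub, CZ, CR, Cadd, Cmul, Copp, C1, C0;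
  cbn [re im]; rewrite ?length_app, ?Nat2Z.inj_add; cbn [length];
  repeat rewrite ?plus_IZR, ?minus_IZR, ?mult_IZR, ?opp_IZR, ?Nat2Z.inj_succ, ?succ_IZR; ring.

(* The fused weight from [i] to [i2] with [j] incoming 1's and outgoing column [K] (see
   [fusedWK_rec]), expanded along the first row: it receives [a], and [j - a] 1's enter below. *)
Fixpoint fused_rec (f : CC -> CC) (eta Lam : CC) (i j : Z) (K : list Z) (i2 : Z) (v lam : CC)
  : CC :=
  match K with
  | [] => if (j =? 0)%Z && (i =? i2)%Z && (0 <=? i)%Z then C1 else C0
  | b :: K' =>
      let step a := W1 f eta i a (i + a - b) b v
                      (dshift eta lam (2 * (j - a) - Z.of_nat (length K'))) Lam
                    * fused_rec f eta Lam (i + a - b) (j - a) K' i2 (v + CZ 2 * eta) lam in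
      step 0%Z + step 1%Z
  end.

Definition is_bit (x : Z) : Prop := x = 0%Z \/ x = 1%Z.

Lemma in_bits n l : In l (bits n) -> length l = n /\ Forall is_bit l.
Proof.
  revert l; induction n; simpl; intros l H.
  - destruct H as [<-|[]]. split; auto.
  - apply in_app_or in H; destruct H as [H|H]; apply in_map_iff in H;
      destruct H as [l' [<- H]]; destruct (IHn l' H); simpl; split; auto;
      constructor; unfold is_bit; auto.
Qed.

Lemma sumZ_cons x l : sumZ (x :: l) = (x + sumZ l)%Z.
Proof. reflexivity. Qed.

Lemma Phi_dshift eta lam l : Forall is_bit l ->
  Phi eta lam l = dshift eta lam (2 * sumZ l - Z.of_nat (length l)).
Proof.
  induction 1 as [|x l Hx _ IH]; [cbn; cz_ring|].
  cbn [Phi fold_right]. fold (Phi eta lam l). rewrite sumZ_cons, IH. cbn [length].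
  destruct Hx as [->| ->]; cbn [Z.eqb]; cz_ring.
Qed.

Section FusedRec.
Variables (f : CC -> CC) (eta Lam : CC).

(* [colW] without the sign test on the incoming [i1], so that it unfolds along the column. *)
Definition colW_tail (i1 : Z) (l1 : list Z) (i2 : Z) (l2 : list Z) (v lam : CC) : CC :=
  let '(e, p) := colW_aux f eta Lam i1 l1 l2 v lam in
  if (e =? i2)%Z && (0 <=? i2)%Z then p else C0.

Lemma colW_tail_cons i a l i2 b K v lam :
  colW_tail i (a :: l) i2 (b :: K) v lam =
  W1 f eta i a (i + a - b) b v (Phi eta lam l) Lam *
  colW_tail (i + a - b) l i2 K (v + CZ 2 * eta) lam.
Proof.
  unfold colW_tail; simpl.
  destruct (colW_aux f eta Lam (i + a - b) l K (v + CZ 2 * eta) lam) as [e p].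
  destruct ((e =? i2)%Z && (0 <=? i2)%Z); ring.
Qed.

Lemma W1_neg i j i' j' v lam : (i < 0)%Z -> W1 f eta i j i' j' v lam Lam = C0.
Proof. intros H; unfold W1. destruct (Z.ltb_spec i 0); [reflexivity|lia]. Qed.

Lemma fused_rec_neg i j K i2 v lam : (i < 0)%Z -> fused_rec f eta Lam i j K i2 v lam = C0.
Proof.
  intros H; destruct K; cbn [fused_rec].
  - destruct (Z.leb_spec 0 i); [lia|]. rewrite !andb_false_r. reflexivity.
  - rewrite !W1_neg by lia. ring.
Qed.

Lemma fused_rec_out_of_range K : forall i j i2 v lam,
  (j < 0 \/ j > Z.of_nat (length K))%Z -> fused_rec f eta Lam i j K i2 v lam = C0.
Proof.
  induction K as [|b K IH]; intros i j i2 v lam Hj; cbn [fused_rec length] in *.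
  - destruct (Z.eqb_spec j 0); [lia|]. reflexivity.
  - rewrite Nat2Z.inj_succ in Hj. rewrite !IH by lia. ring.
Qed.

Lemma Csum_colW_tail_head n i j a i2 b K v lam : length K = n ->
  Csum (map (fun l => colW_tail i (a :: l) i2 (b :: K) v lam)
     (filter (fun l => (sumZ l =? j - a)%Z) (bits n))) =
  W1 f eta i a (i + a - b) b v (dshift eta lam (2 * (j - a) - Z.of_nat (length K))) Lam *
  Csum (map (fun l => colW_tail (i + a - b) l i2 K (v + CZ 2 * eta) lam)
     (filter (fun l => (sumZ l =? j - a)%Z) (bits n))).
Proof.
  intros HK. rewrite <- Csum_map_mull. apply Csum_map_ext_in. intros l Hl.
  apply filter_In in Hl as [Hl Hs]. apply Z.eqb_eq in Hs.
  destruct (in_bits _ _ Hl) as [Hlen H01].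
  rewrite colW_tail_cons, (Phi_dshift _ _ _ H01), Hs, Hlen, HK. reflexivity.
Qed.

Lemma Csum_colW_tail n : forall i j K i2 v lam, length K = n ->
  Csum (map (fun l => colW_tail i l i2 K v lam)
     (filter (fun l => (sumZ l =? j)%Z) (bits n))) = fused_rec f eta Lam i j K i2 v lam.
Proof.
  induction n; intros i j K i2 v lam HK.
  - destruct K; [|discriminate]. cbn [bits filter sumZ fold_right map Csum fused_rec].
    destruct (Z.eqb_spec 0 j) as [<-|Hj]; cbn.
    + unfold colW_tail; cbn. destruct (Z.eqb_spec i i2) as [<-|]; cbn;
        [destruct (0 <=? i)%Z|]; cbn; ring.
    + destruct (Z.eqb_spec j 0); [lia|]. reflexivity.
  - destruct K as [|b K]; [discriminate|]. injection HK as HK.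
    cbn [bits fused_rec]. rewrite filter_app, !filter_map_swap, map_app, Csum_app, !map_map.
    rewrite (filter_ext (fun x => (sumZ (0%Z :: x) =? j)%Z) (fun x => (sumZ x =? j - 0)%Z))
      by (intros x; rewrite sumZ_cons; f_equal; lia).
    rewrite (filter_ext (fun x => (sumZ (1%Z :: x) =? j)%Z) (fun x => (sumZ x =? j - 1)%Z))
      by (intros x; rewrite sumZ_cons; destruct (Z.eqb_spec (1 + sumZ x) j);
          destruct (Z.eqb_spec (sumZ x) (j - 1)); auto; lia).
    rewrite !Csum_colW_tail_head, !IHn by auto. reflexivity.
Qed.

Lemma fusedWK_rec n i1 j1 i2 K v lam : length K = n ->
  fusedWK f eta Lam n i1 j1 i2 K v lam = fused_rec f eta Lam i1 j1 K i2 v lam.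
Proof.
  intros HK. unfold fusedWK, colW.
  destruct (Z.ltb_spec i1 0).
  - rewrite fused_rec_neg by auto. apply Csum_map_eq0. intros; reflexivity.
  - rewrite <- (Csum_colW_tail n i1 j1 K i2 v lam HK).
    apply Csum_map_ext_in. intros l _. unfold colW_tail.
    destruct (colW_aux f eta Lam i1 l K v lam).
    destruct (Z.ltb_spec i2 0), (Z.leb_spec 0 i2); try lia; cbn;
      rewrite ?andb_false_r, ?andb_true_r; reflexivity.
Qed.

Lemma Cmul3_congr a b c a' b' c' : a = a' -> b = b' -> c = c' -> a * b * c = a' * (b' * c').
Proof. intros -> -> ->. ring. Qed.

Lemma distr_congr a0 f0 a1 f1 g a0' f0' g0' x :
  a0 * f0 * g = a0' * (f0' * g0') -> a1 * f1 * g = x ->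
  (a0 * f0 + a1 * f1) * g = a0' * (f0' * g0') + x.
Proof. intros <- <-. ring. Qed.

Ltac args_congr := rewrite ?sumZ_cons, ?dshift_dshift, ?length_app; f_equal;
  first [lia | f_equal; lia | cz_ring].

Lemma Csum_seq_add_shift (g0 g1 h : nat -> CC) N :
  (forall k, h k = g0 k + match k with O => C0 | S k' => g1 k' end) ->
  Csum (map g0 (seq 0 (S N + 1))) + Csum (map g1 (seq 0 (N + 1))) = Csum (map h (seq 0 (S N + 1))).
Proof.
  intros Hh. rewrite (map_ext _ _ Hh), Csum_map_add, !Nat.add_1_r, (seq_0_S (S N)).
  cbn [map Csum]. rewrite !map_map. change (fun x : nat => g1 x) with g1. ring.
Qed.

(* [k] is the number of 1's entering the block [K1]; the terms with [k > length K1] vanish,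
   so any [N >= length K1] bounds the sum. *)
Lemma fused_rec_app K1 : forall K2 i j i2 v lam N, (length K1 <= N)%nat ->
  fused_rec f eta Lam i j (K1 ++ K2) i2 v lam =
  Csum (map (fun k : nat =>
     fused_rec f eta Lam i (Z.of_nat k) K1 (i + Z.of_nat k - sumZ K1) v
        (dshift eta lam (2 * (j - Z.of_nat k) - Z.of_nat (length K2)))
     * fused_rec f eta Lam (i + Z.of_nat k - sumZ K1) (j - Z.of_nat k) K2 i2
        (v + CZ 2 * eta * CZ (Z.of_nat (length K1))) lam) (seq 0 (N + 1))).
Proof.
  induction K1 as [|b K1 IH]; intros K2 i j i2 v lam N HN.
  - rewrite Nat.add_1_r, seq_0_S. cbn [map Csum app sumZ fold_right length].
    rewrite Csum_map_eq0.
    2:{ intros x Hx. apply in_map_iff in Hx as [k [<- _]].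
        rewrite fused_rec_out_of_range by (cbn [length]; lia). ring. }
    cbn [fused_rec].
    destruct (Z.ltb_spec i 0) as [Hi|Hi]; [rewrite !fused_rec_neg by lia; ring|].
    replace (i + Z.of_nat 0 - 0)%Z with i by lia. replace (j - Z.of_nat 0)%Z with j by lia.
    replace (v + CZ 2 * eta * CZ (Z.of_nat 0)) with v by cz_ring.
    destruct (Z.leb_spec 0 i); [|lia]. rewrite !Z.eqb_refl. cbn. ring.
  - destruct N as [|N]; [cbn in HN; lia|]. cbn [length] in HN. cbn [app fused_rec].
    rewrite (IH K2 (i + 0 - b)%Z (j - 0)%Z i2 (v + CZ 2 * eta) lam (S N)),
      (IH K2 (i + 1 - b)%Z (j - 1)%Z i2 (v + CZ 2 * eta) lam N), <- !Csum_map_mull by lia.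
    apply Csum_seq_add_shift. intros [|k]; apply distr_congr;
      try (apply Cmul3_congr; args_congr).
    rewrite (fused_rec_out_of_range K1) by lia. ring.
Qed.
End FusedRec.

(** * Exchange relations and sorting of the outgoing column *)

Section Weights.
Variables (f : CC -> CC) (eta Lam : CC).

Lemma W1_00 i v l : (0 <= i)%Z -> W1 f eta i 0 i 0 v l Lam =
  f (eta * (Lam - CZ 2 * CZ i) - v) * f (l + CZ 2 * CZ i * eta) / (f (eta * Lam - v) * f l).
Proof.
  intros H; unfold W1. destruct (Z.ltb_spec i 0); [lia|]. rewrite !Z.eqb_refl. reflexivity.
Qed.

Lemma W1_10 i v l : (0 <= i)%Z -> W1 f eta i 1 (i + 1) 0 v l Lam =
  f (v + l + eta * (CZ 2 * CZ i + CZ 2 - Lam)) * f (CZ 2 * eta) / (f (eta * Lam - v) * f l).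
Proof.
  intros H; unfold W1. destruct (Z.ltb_spec i 0); [lia|]. rewrite !Z.eqb_refl. reflexivity.
Qed.

(* For [i = 0] the weight vanishes, and so does the formula through its factor [f 0]. *)
Lemma W1_01 i v l : f C0 = C0 -> (0 <= i)%Z -> W1 f eta i 0 (i - 1) 1 v l Lam =
  f (l - v + eta * (CZ 2 * CZ i - CZ 2 - Lam)) * f (CZ 2 * eta * (Lam + C1 - CZ i))
      * f (CZ 2 * CZ i * eta) / (f (eta * Lam - v) * f l * f (CZ 2 * eta)).
Proof.
  intros f0 H; unfold W1. destruct (Z.ltb_spec i 0); [lia|]. rewrite !Z.eqb_refl.
  destruct (Z.leb_spec 1 i); [reflexivity|].
  replace i with 0%Z by lia. replace (CZ 2 * CZ 0 * eta) with C0 by ring.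
  rewrite f0. cbn. unfold Cdiv. ring.
Qed.

Lemma W1_11 i v l : (0 <= i)%Z -> W1 f eta i 1 i 1 v l Lam =
  f (eta * (CZ 2 * CZ i - Lam) - v) * f (l + CZ 2 * eta * (CZ i - Lam)) / (f (eta * Lam - v) * f l).
Proof.
  intros H; unfold W1. destruct (Z.ltb_spec i 0); [lia|]. rewrite !Z.eqb_refl. reflexivity.
Qed.

Lemma W1_01_10 i v l : f C0 = C0 -> (0 <= i)%Z ->
  W1 f eta i 0 (i - 1) 1 v (l + CZ 2 * eta) Lam * W1 f eta (i - 1) 1 i 0 (v + CZ 2 * eta) l Lam =
  f (l + CZ 2 * eta - v + eta * (CZ 2 * CZ i - CZ 2 - Lam)) * f (CZ 2 * eta * (Lam + C1 - CZ i))
    * f (CZ 2 * CZ i * eta) / (f (eta * Lam - v) * f (l + CZ 2 * eta) * f (CZ 2 * eta))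
  * (f (v + CZ 2 * eta + l + eta * (CZ 2 * CZ (i - 1) + CZ 2 - Lam)) * f (CZ 2 * eta)
     / (f (eta * Lam - (v + CZ 2 * eta)) * f l)).
Proof.
  intros f0 Hi. rewrite W1_01 by auto.
  destruct (Z.eq_dec i 0) as [->|Hi0].
  - replace (CZ 2 * CZ 0 * eta) with C0 by ring. rewrite f0. unfold Cdiv. ring.
  - replace (W1 f eta (i - 1) 1 i 0) with (W1 f eta (i - 1) 1 (i - 1 + 1) 0) by (f_equal; lia).
    rewrite W1_10 by lia. reflexivity.
Qed.

End Weights.

Definition f_frozen (f : CC -> CC) : CC -> CC := f.

(* Rewrites every argument of [f] into ring normal form, so that arguments that are equal
   as polynomials become syntactically equal for [field]; the vanishing summands
   [C0 * x] fix the order of the variables. *)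

Ltac normalize_f_args f x1 x2 x3 x4 x5 :=
  repeat match goal with
  | |- context [f ?x] =>
    let y := fresh "y" in let E := fresh "E" in
    remember x as y eqn:E;
    replace x with (C0 * x1 + C0 * x2 + C0 * x3 + C0 * x4 + C0 * x5 + x) in E by ring;
    ring_simplify in E;
    change (f y) with (f_frozen f y); subst y
  end; unfold f_frozen.

Ltac nonzero_f f :=
  match goal with H : f ?a <> C0 |- f ?b <> C0 => replace b with a by ring; exact H end.

Section Exchange.
Variables (f A B : CC -> CC).
Hypothesis addition : forall s d, f (s + d) * f (s - d) = A s * B d - B s * A d.

Definition Fpair (s d : CC) : CC := f (s + d) * f (s - d).

Lemma f_0 : f C0 = C0.
Proof.
  apply Csqr_eq0. pose proof (addition C0 C0) as E.
  replace (C0 + C0) with C0 in E by ring. replace (C0 - C0) with C0 in E by ring.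
  rewrite E. ring.
Qed.

(* Each [Fpair] is a 2x2 minor [A s B d - B s A d]; by the Pluecker relation each bracket
   collapses to [-+ f (l + 2 al) f (l -+ 2 eta) Fpair y w], and the two terms cancel. *)
Lemma Fpair_three_term l al be v eta :
  let x := l + al - eta in let y := be + eta in let u := al + eta in let w := v + eta in
  let x2 := l + al + eta in let u2 := al - eta in
  f (l + (eta + eta)) * (Fpair x y * Fpair (- w) u - Fpair x w * Fpair y (- u)) +
  f (l - (eta + eta)) * (Fpair x2 w * Fpair y (- u2) - Fpair x2 y * Fpair (- w) (- u2)) = C0.
Proof.
  intros x y u w x2 u2.
  set (D := fun s d => A s * B d - B s * A d).
  assert (HP : forall s d, Fpair s d = D s d) by (intros; apply addition).
  assert (Deven : forall s d, D s (- d) = D s d).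
  { intros s d. rewrite <- !HP. unfold Fpair.
    replace (s + - d) with (s - d) by ring. replace (s - - d) with (s + d) by ring. ring. }
  assert (Danti : forall s d, D d s = - D s d) by (intros; unfold D; ring).
  assert (Pluecker : forall a b c d, D a b * D c d + D a d * D b c = D a c * D b d)
    by (intros; unfold D; ring).
  rewrite !HP, (Danti u (- w)), (Deven u w), (Deven y u), (Deven y u2), (Deven (- w) u2),
    (Danti u2 (- w)), (Deven u2 w).
  replace (D x y * - D u w - D x w * D y u) with (- (D x u * D y w))
    by (rewrite <- (Pluecker x y u w); ring).
  replace (D x2 w * D y u2 - D x2 y * - D u2 w) with (D x2 u2 * D y w)
    by (rewrite <- (Pluecker x2 y u2 w); ring).
  rewrite <- !HP. unfold Fpair.
  replace (x + u) with (l + al + al) by (unfold x, u; ring).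
  replace (x2 + u2) with (l + al + al) by (unfold x2, u2; ring).
  replace (x - u) with (l - (eta + eta)) by (unfold x, u; ring).
  replace (x2 - u2) with (l + (eta + eta)) by (unfold x2, u2; ring).
  ring.
Qed.

(* Exchanging the outgoing entries (1, 0) of two consecutive rows into (0, 1); the suffix
   records the incoming entries. *)
Variables (eta Lam v l : CC).
Hypotheses (Hv0 : f (eta * Lam - v) <> C0) (Hv1 : f (eta * Lam - (v + CZ 2 * eta)) <> C0)
  (Heta : f (CZ 2 * eta) <> C0)
  (Hl : f l <> C0) (Hlp : f (l + CZ 2 * eta) <> C0) (Hlm : f (l - CZ 2 * eta) <> C0).

Lemma exchange_00 i : (0 <= i)%Z ->
  W1 f eta i 0 (i - 1) 1 v (l - CZ 2 * eta) Lam
    * W1 f eta (i - 1) 0 (i - 1) 0 (v + CZ 2 * eta) l Lam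
  = W1 f eta i 0 i 0 v (l - CZ 2 * eta) Lam * W1 f eta i 0 (i - 1) 1 (v + CZ 2 * eta) l Lam.
Proof.
  intros Hi. destruct (Z.eq_dec i 0) as [->|Hi0].
  - unfold W1 at 1 4. cbn. ring.
  - rewrite !W1_01, !W1_00 by (auto using f_0; lia). rewrite !CZ_sub, !CZ_1.
    normalize_f_args f eta Lam v l (CZ i).
    field; repeat split; nonzero_f f.
Qed.

Lemma exchange_11 i : (0 <= i)%Z ->
  W1 f eta i 1 i 1 v (l + CZ 2 * eta) Lam * W1 f eta i 1 (i + 1) 0 (v + CZ 2 * eta) l Lam
  = W1 f eta i 1 (i + 1) 0 v (l + CZ 2 * eta) Lam
    * W1 f eta (i + 1) 1 (i + 1) 1 (v + CZ 2 * eta) l Lam.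
Proof.
  intros Hi. rewrite !W1_11, !W1_10 by lia. rewrite !CZ_add, !CZ_1.
  normalize_f_args f eta Lam v l (CZ i).
  field; repeat split; nonzero_f f.
Qed.

Lemma exchange_mixed i : (0 <= i)%Z ->
  W1 f eta i 0 (i - 1) 1 v (l + CZ 2 * eta) Lam * W1 f eta (i - 1) 1 i 0 (v + CZ 2 * eta) l Lam
  + W1 f eta i 1 i 1 v (l - CZ 2 * eta) Lam * W1 f eta i 0 i 0 (v + CZ 2 * eta) l Lam
  = W1 f eta i 0 i 0 v (l + CZ 2 * eta) Lam * W1 f eta i 1 i 1 (v + CZ 2 * eta) l Lam
  + W1 f eta i 1 (i + 1) 0 v (l - CZ 2 * eta) Lam * W1 f eta (i + 1) 0 i 1 (v + CZ 2 * eta) l Lam.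
Proof.
  intros Hi.
  replace (W1 f eta (i + 1) 0 i 1) with (W1 f eta (i + 1) 0 (i + 1 - 1) 1) by (f_equal; lia).
  rewrite W1_01_10, !W1_11, !W1_00, !W1_10, W1_01 by (auto using f_0; lia).
  rewrite !CZ_sub, !CZ_add, !CZ_1.
  pose proof (Fpair_three_term l (eta * (CZ 2 * CZ i - Lam)) (eta * Lam) v eta) as K.
  cbv zeta in K. apply Csub_eq0.
  match type of K with ?KL = C0 =>
    transitivity (KL / (f (eta * Lam - v) * f (eta * Lam - (v + CZ 2 * eta)) * f l *
                        f (l + CZ 2 * eta) * f (l - CZ 2 * eta)));
    [ | rewrite K; field; repeat split; auto ]
  end.
  unfold Fpair. normalize_f_args f eta Lam v l (CZ i).
  field; repeat split; nonzero_f f.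
Qed.
End Exchange.

Section Canonical.
Variables (f A B : CC -> CC).
Hypothesis addition : forall s d, f (s + d) * f (s - d) = A s * B d - B s * A d.
Variables (eta Lam : CC).
Hypothesis Heta : f (CZ 2 * eta) <> C0.

Definition generic_v (v : CC) : Prop := forall m : Z, f (eta * Lam - v + CZ 2 * CZ m * eta) <> C0.
Definition generic_lam (lam : CC) : Prop := forall m : Z, f (lam + CZ 2 * CZ m * eta) <> C0.

Lemma generic_v_0 v : generic_v v -> f (eta * Lam - v) <> C0.
Proof. intros Hv E. apply (Hv 0%Z). rewrite <- E. f_equal. ring. Qed.
Lemma generic_v_1 v : generic_v v -> f (eta * Lam - (v + CZ 2 * eta)) <> C0.
Proof. intros Hv E. apply (Hv (-1)%Z). rewrite <- E. f_equal. ring. Qed.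
Lemma generic_v_shift v : generic_v v -> generic_v (v + CZ 2 * eta).
Proof. intros Hv m E. apply (Hv (m - 1)%Z). rewrite <- E. f_equal. rewrite CZ_sub, CZ_1. ring. Qed.

Lemma generic_lam_0 lam z : generic_lam lam -> f (dshift eta lam z) <> C0.
Proof. intros Hl E. apply (Hl z). rewrite <- E. unfold dshift. f_equal. ring. Qed.
Lemma generic_lam_p lam z : generic_lam lam -> f (dshift eta lam z + CZ 2 * eta) <> C0.
Proof.
  intros Hl E. apply (Hl (z + 1)%Z). rewrite <- E. unfold dshift. f_equal.
  rewrite CZ_add, CZ_1. ring.
Qed.
Lemma generic_lam_m lam z : generic_lam lam -> f (dshift eta lam z - CZ 2 * eta) <> C0.
Proof.
  intros Hl E. apply (Hl (z - 1)%Z). rewrite <- E. unfold dshift. f_equal.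
  rewrite CZ_sub, CZ_1. ring.
Qed.

Lemma fused_rec_swap K i j i2 v lam : generic_v v -> generic_lam lam ->
  fused_rec f eta Lam i j (1%Z :: 0%Z :: K) i2 v lam =
  fused_rec f eta Lam i j (0%Z :: 1%Z :: K) i2 v lam.
Proof.
  intros Hv Hl.
  destruct (Z.ltb_spec i 0). { rewrite !fused_rec_neg by lia. reflexivity. }
  cbn [fused_rec length].
  rewrite !Z.add_0_r, !Z.sub_0_r, !Z.sub_add, !Z.add_simpl_r.
  set (n := Z.of_nat (length K)).
  pose proof (generic_v_0 v Hv) as Hv0. pose proof (generic_v_1 v Hv) as Hv1.
  pose proof (exchange_00 f A B addition eta Lam v (dshift eta lam (2 * j - n)) Hv0 Hv1 Heta
     (generic_lam_0 _ _ Hl) (generic_lam_p _ _ Hl) (generic_lam_m _ _ Hl) i ltac:(lia)) as E0.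
  pose proof (exchange_mixed f A B addition eta Lam v (dshift eta lam (2 * (j - 1) - n)) Hv0 Hv1
     Heta (generic_lam_0 _ _ Hl) (generic_lam_p _ _ Hl) (generic_lam_m _ _ Hl) i ltac:(lia)) as E1.
  pose proof (exchange_11 f eta Lam v (dshift eta lam (2 * (j - 1 - 1) - n)) Hv0 Hv1 Heta
     (generic_lam_0 _ _ Hl) (generic_lam_p _ _ Hl) (generic_lam_m _ _ Hl) i ltac:(lia)) as E2.
  replace (dshift eta lam (2 * j - n) - CZ 2 * eta) with
    (dshift eta lam (2 * j - Z.of_nat (S (length K)))) in E0 by (unfold n; cz_ring).
  replace (dshift eta lam (2 * (j - 1) - n) + CZ 2 * eta) with
    (dshift eta lam (2 * j - Z.of_nat (S (length K)))) in E1 by (unfold n; cz_ring).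
  replace (dshift eta lam (2 * (j - 1) - n) - CZ 2 * eta) with
    (dshift eta lam (2 * (j - 1) - Z.of_nat (S (length K)))) in E1 by (unfold n; cz_ring).
  replace (dshift eta lam (2 * (j - 1 - 1) - n) + CZ 2 * eta) with
    (dshift eta lam (2 * (j - 1) - Z.of_nat (S (length K)))) in E2 by (unfold n; cz_ring).
  (* Group the terms by the number (0, 1 or 2) of 1's entering the two rows. *)
  set (F0 := fused_rec f eta Lam (i - 1) j K i2 (v + CZ 2 * eta + CZ 2 * eta) lam).
  set (F1 := fused_rec f eta Lam i (j - 1) K i2 (v + CZ 2 * eta + CZ 2 * eta) lam).
  set (F2 := fused_rec f eta Lam (i + 1) (j - 1 - 1) K i2 (v + CZ 2 * eta + CZ 2 * eta) lam).
  apply Csub_eq0.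
  match type of E0 with ?a0 = ?b0 => match type of E1 with ?a1 = ?b1 =>
  match type of E2 with ?a2 = ?b2 =>
    transitivity ((a0 - b0) * F0 + (a1 - b1) * F1 + (a2 - b2) * F2);
      [ring | rewrite E0, E1, E2; ring]
  end end end.
Qed.

Variables (i2 : Z) (lam : CC).
Hypothesis Hlam : generic_lam lam.

Definition same_fused (K K' : list Z) : Prop := forall i j v, generic_v v ->
  fused_rec f eta Lam i j K i2 v lam = fused_rec f eta Lam i j K' i2 v lam.

Lemma same_fused_trans K1 K2 K3 : same_fused K1 K2 -> same_fused K2 K3 -> same_fused K1 K3.
Proof. intros E1 E2 i j v Hv. rewrite E1, E2 by auto. reflexivity. Qed.

Lemma same_fused_cons b K K' :
  length K = length K' -> same_fused K K' -> same_fused (b :: K) (b :: K').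
Proof.
  intros HL E i j v Hv. cbn [fused_rec]. rewrite HL, !E by (apply generic_v_shift; auto).
  reflexivity.
Qed.

Lemma same_fused_bubble p R : same_fused (0%Z :: repeat 1%Z p ++ R) (repeat 1%Z p ++ 0%Z :: R).
Proof.
  induction p as [|p IH]; [intros i j v Hv; reflexivity|].
  apply same_fused_trans with (1%Z :: 0%Z :: repeat 1%Z p ++ R).
  - intros i j v Hv. symmetry. apply fused_rec_swap; auto.
  - apply same_fused_cons; auto. cbn [length]. rewrite !length_app, !repeat_length. cbn. lia.
Qed.

Lemma sumZ_bits_bounds K : Forall is_bit K -> (0 <= sumZ K <= Z.of_nat (length K))%Z.
Proof.
  induction 1 as [|x K Hx _ IH]; cbn [sumZ fold_right length]; [lia|].
  fold (sumZ K). destruct Hx as [-> | ->]; lia.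
Qed.

Lemma same_fused_sorted K : Forall is_bit K ->
  same_fused K (repeat 1%Z (Z.to_nat (sumZ K)) ++ repeat 0%Z (length K - Z.to_nat (sumZ K))).
Proof.
  induction 1 as [|b K Hb HK IH]; [intros i j v Hv; reflexivity|].
  pose proof (sumZ_bits_bounds K HK) as Hs.
  apply same_fused_trans with
    (b :: repeat 1%Z (Z.to_nat (sumZ K)) ++ repeat 0%Z (length K - Z.to_nat (sumZ K))).
  { apply same_fused_cons; auto. rewrite length_app, !repeat_length. lia. }
  rewrite sumZ_cons. cbn [length]. destruct Hb as [-> | ->].
  - replace (Z.to_nat (0 + sumZ K)) with (Z.to_nat (sumZ K)) by lia.
    replace (S (length K) - Z.to_nat (sumZ K))%nat with (S (length K - Z.to_nat (sumZ K))) by lia.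
    apply same_fused_bubble.
  - replace (Z.to_nat (1 + sumZ K)) with (S (Z.to_nat (sumZ K))) by lia.
    intros i j v Hv. reflexivity.
Qed.
End Canonical.

Lemma sumZ_repeat1 n : sumZ (repeat 1%Z n) = Z.of_nat n.
Proof. induction n as [|n IH]; [reflexivity|]. cbn [repeat]. rewrite sumZ_cons, IH. lia. Qed.

Theorem fusion_identity (f A B : CC -> CC)
  (addition : forall s d, f (s + d) * f (s - d) = A s * B d - B s * A d)
  (eta Lam v lam : CC) (Heta : f (CZ 2 * eta) <> C0)
  (Hlam : generic_lam f eta lam) (Hv : generic_v f eta Lam v)
  (J : nat) (i1 j1 i2 j2 : nat) (Hj2 : (j2 <= J)%nat)
  (K : list Z) (HKlen : length K = J) (HK01 : Forall is_bit K) (HKsum : sumZ K = Z.of_nat j2) :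
  fusedWK f eta Lam J (Z.of_nat i1) (Z.of_nat j1) (Z.of_nat i2) K v lam =
  Csum (map (fun k : nat =>
     let kz := Z.of_nat k in
     let m := (Z.of_nat i1 + kz - Z.of_nat j2)%Z in
     fusedW f eta Lam j2 (Z.of_nat i1) kz m (Z.of_nat j2) v
        (lam - CZ 2 * eta * CZ (Z.of_nat J - 2 * Z.of_nat j1 - Z.of_nat j2 + 2 * kz))
     * fusedW f eta Lam (J - j2) m (Z.of_nat j1 - kz) (Z.of_nat i2) 0
        (v + CZ 2 * eta * CZ (Z.of_nat j2)) lam)
   (seq 0 (J + 1))).
Proof.
  rewrite (fusedWK_rec _ _ _ _ _ _ _ _ _ _ HKlen),
    (same_fused_sorted f A B addition eta Lam Heta _ lam Hlam K HK01 _ _ _ Hv),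
    HKsum, HKlen, Nat2Z.id,
    (fused_rec_app f eta Lam (repeat 1%Z j2) (repeat 0%Z (J - j2)) _ _ _ _ _ J)
    by (rewrite repeat_length; lia).
  apply Csum_map_ext_in. intros k _. cbv zeta. unfold fusedW.
  destruct (Z.ltb_spec (Z.of_nat j2) 0), (Z.ltb_spec (Z.of_nat j2) (Z.of_nat j2)),
    (Z.ltb_spec 0 0), (Z.ltb_spec (Z.of_nat (J - j2)) 0); try lia. cbn [orb].
  rewrite !fusedWK_rec by (rewrite length_app, !repeat_length; lia).
  rewrite Nat2Z.id, Nat.sub_diag, Nat.sub_0_r, app_nil_r, sumZ_repeat1, !repeat_length.
  f_equal. f_equal. unfold dshift. rewrite Nat2Z.inj_sub by lia.
  replace (2 * (Z.of_nat j1 - Z.of_nat k) - (Z.of_nat J - Z.of_nat j2))%Z with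
    (- (Z.of_nat J - 2 * Z.of_nat j1 - Z.of_nat j2 + 2 * Z.of_nat k))%Z by lia.
  rewrite CZ_opp. ring.
Qed.

(** * The addition formula for [sin (pi z)] *)

Lemma Cexp_add a b : Cexp (a + b) = Cexp a * Cexp b.
Proof.
  apply CC_ext; unfold Cexp, Cadd, Cmul; cbn [re im]; rewrite exp_plus, ?cos_plus, ?sin_plus; ring.
Qed.

Lemma Cexp_0 : Cexp C0 = C1.
Proof. apply CC_ext; unfold Cexp, C0, C1, CR; cbn [re im]; rewrite exp_0, ?cos_0, ?sin_0; ring. Qed.

Lemma Cexp_opp_mul a : Cexp (- a) * Cexp a = C1.
Proof. rewrite <- Cexp_add, <- Cexp_0. f_equal. ring. Qed.

Lemma Cexp_neq0 a : Cexp a <> C0.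
Proof.
  intros E. apply C1_neq_C0. rewrite <- (Cexp_opp_mul a), E. ring.
Qed.

Lemma Cexp_opp a : Cexp (- a) = C1 / Cexp a.
Proof. rewrite <- (Cexp_opp_mul a). field. apply Cexp_neq0. Qed.

Lemma two_i_neq0 : CZ 2 * Ci <> C0.
Proof.
  intros E. apply (f_equal im) in E. unfold CZ, CR, Ci, Cmul, C0 in E. simpl in E. lra.
Qed.

Lemma sinpi_addition s d :
  sinpi (s + d) * sinpi (s - d) = (sinpi s * sinpi s) * C1 - C1 * (sinpi d * sinpi d).
Proof.
  unfold sinpi.
  replace (Ci * CPI * (s + d)) with (Ci * CPI * s + Ci * CPI * d) by ring.
  replace (Ci * CPI * (s - d)) with (Ci * CPI * s + - (Ci * CPI * d)) by ring.
  rewrite !Cexp_opp, !Cexp_add, !Cexp_opp.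
  pose proof (Cexp_neq0 (Ci * CPI * s)). pose proof (Cexp_neq0 (Ci * CPI * d)).
  field; repeat split; auto. all: intro E; apply two_i_neq0; rewrite E; ring.
Qed.

(** * Absolutely summable families indexed by [Z] *)

(* The l^1 norm; any norm equivalent to the modulus serves for the estimates below. *)
Definition Cnorm (x : CC) : R := (Rabs (re x) + Rabs (im x))%R.

Lemma Cnorm_ge0 x : (0 <= Cnorm x)%R.
Proof. unfold Cnorm. pose proof (Rabs_pos (re x)); pose proof (Rabs_pos (im x)); lra. Qed.

Lemma Cnorm_add x y : (Cnorm (x + y)%CC <= Cnorm x + Cnorm y)%R.
Proof.
  unfold Cnorm, Cadd; cbn [re im].
  pose proof (Rabs_triang (re x) (re y)); pose proof (Rabs_triang (im x) (im y)); lra.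
Qed.

Lemma Cnorm_opp x : Cnorm (- x)%CC = Cnorm x.
Proof. unfold Cnorm, Copp; cbn [re im]. rewrite !Rabs_Ropp. reflexivity. Qed.

Lemma Cnorm_sub x y : (Cnorm (x - y)%CC <= Cnorm x + Cnorm y)%R.
Proof. unfold Csub. rewrite <- (Cnorm_opp y). apply Cnorm_add. Qed.

Lemma Cnorm_sub_sym x y : Cnorm (x - y) = Cnorm (y - x).
Proof. rewrite <- Cnorm_opp. f_equal. ring. Qed.

Lemma Cnorm_mul x y : (Cnorm (x * y)%CC <= Cnorm x * Cnorm y)%R.
Proof.
  unfold Cnorm, Cmul; cbn [re im].
  pose proof (Rabs_triang (re x * re y) (- (im x * im y))) as H1.
  pose proof (Rabs_triang (re x * im y) (im x * re y)) as H2.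
  rewrite Rabs_Ropp, !Rabs_mult in H1. rewrite !Rabs_mult in H2.
  pose proof (Rabs_pos (re x)); pose proof (Rabs_pos (im x));
  pose proof (Rabs_pos (re y)); pose proof (Rabs_pos (im y)). unfold Rminus. nra.
Qed.

Lemma Cnorm_re x : (Rabs (re x) <= Cnorm x)%R.
Proof. unfold Cnorm. pose proof (Rabs_pos (im x)); lra. Qed.

Lemma Cnorm_im x : (Rabs (im x) <= Cnorm x)%R.
Proof. unfold Cnorm. pose proof (Rabs_pos (re x)); lra. Qed.

Lemma Cnorm_small_eq0 x : (forall e, (0 < e)%R -> (Cnorm x <= e)%R) -> x = C0.
Proof.
  intros H. pose proof (Cnorm_ge0 x).
  assert (Hx : Cnorm x = 0%R).
  { destruct (Rle_lt_dec (Cnorm x) 0); [lra|]. specialize (H (Cnorm x / 2)%R ltac:(lra)). lra. }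
  unfold Cnorm in Hx. pose proof (Rabs_pos (re x)); pose proof (Rabs_pos (im x)).
  apply CC_ext; unfold C0, CR; cbn [re im];
    match goal with |- ?r = 0%R => destruct (Req_dec r 0) as [|Hr]; [assumption|] end;
    exfalso; apply (Rabs_no_R0 _ Hr); lra.
Qed.

Lemma Cnorm_Cexp w : (Cnorm (Cexp w) <= 2 * exp (re w))%R.
Proof.
  unfold Cnorm, Cexp; cbn [re im]. rewrite !Rabs_mult, Rabs_right by (left; apply exp_pos).
  pose proof (exp_pos (re w)). pose proof (COS_bound (im w)); pose proof (SIN_bound (im w)).
  assert (Rabs (cos (im w)) <= 1)%R by (apply Rabs_le; lra).
  assert (Rabs (sin (im w)) <= 1)%R by (apply Rabs_le; lra). nra.
Qed.

Definition Rsum (l : list R) : R := fold_right Rplus 0%R l.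

Lemma Rsum_app l1 l2 : Rsum (l1 ++ l2) = (Rsum l1 + Rsum l2)%R.
Proof. induction l1 as [|x l1 IH]; unfold Rsum in *; cbn; [ring|]. rewrite IH. ring. Qed.

Lemma Rsum_cons x l : Rsum (x :: l) = (x + Rsum l)%R.
Proof. reflexivity. Qed.

Lemma Rsum_perm (l l' : list R) : Permutation l l' -> Rsum l = Rsum l'.
Proof. induction 1; unfold Rsum in *; simpl; try congruence. ring. Qed.

Lemma Rsum_map_nonneg {A} (w : A -> R) l : (forall x, 0 <= w x)%R -> (0 <= Rsum (map w l))%R.
Proof.
  intros Hw; induction l as [|x l IH]; unfold Rsum in *; simpl; [lra|]. specialize (Hw x). lra.
Qed.

Lemma Rsum_map_mull {A} (c : R) (g : A -> R) l :
  Rsum (map (fun x => c * g x)%R l) = (c * Rsum (map g l))%R.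
Proof. induction l; unfold Rsum in *; simpl; [ring|]. rewrite IHl; ring. Qed.

Lemma Rsum_list_prod {A B} (a : A -> R) (b : B -> R) l1 l2 :
  Rsum (map (fun p => a (fst p) * b (snd p))%R (list_prod l1 l2)) =
  (Rsum (map a l1) * Rsum (map b l2))%R.
Proof.
  induction l1 as [|x l1 IH]; simpl; [unfold Rsum; simpl; ring|].
  rewrite map_app, Rsum_app, IH, map_map. simpl. rewrite (Rsum_map_mull (a x) b). ring.
Qed.

Lemma Cnorm_Csum_le {A} (T : A -> CC) (w : A -> R) L : (forall p, Cnorm (T p) <= w p)%R ->
  (Cnorm (Csum (map T L)) <= Rsum (map w L))%R.
Proof.
  intros Hw; induction L as [|x L IH]; unfold Rsum in *; simpl.
  - unfold Cnorm, C0, CR; simpl. rewrite Rabs_R0. lra.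
  - pose proof (Cnorm_add (T x) (Csum (map T L))). specialize (Hw x). lra.
Qed.

Definition Zrange (N : nat) : list Z :=
  map (fun n => (Z.of_nat n - Z.of_nat N)%Z) (seq 0 (2 * N + 1)).

Lemma in_Zrange N j : In j (Zrange N) <-> (- Z.of_nat N <= j <= Z.of_nat N)%Z.
Proof.
  unfold Zrange. rewrite in_map_iff. split.
  - intros [n [<- Hn]]. apply in_seq in Hn. lia.
  - intros Hj. exists (Z.to_nat (j + Z.of_nat N)). split; [lia|]. apply in_seq. lia.
Qed.

Lemma NoDup_Zrange N : NoDup (Zrange N).
Proof. apply Injective_map_NoDup; [intros x y E; lia | apply seq_NoDup]. Qed.

Lemma Zrange_S N : Zrange (S N) = (- Z.of_nat (S N))%Z :: Zrange N ++ [Z.of_nat (S N)].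
Proof.
  unfold Zrange. replace (2 * S N + 1)%nat with (S ((2 * N + 1) + 1)) by lia.
  rewrite seq_0_S, map_cons, seq_app, !map_app, !map_map. cbn [seq map].
  replace (Z.of_nat 0 - Z.of_nat (S N))%Z with (- Z.of_nat (S N))%Z by lia.
  replace (Z.of_nat (S (0 + (2 * N + 1))) - Z.of_nat (S N))%Z with (Z.of_nat (S N)) by lia.
  do 2 f_equal. apply map_ext. intros n. lia.
Qed.

Lemma Cpartial_Zrange a N : Cpartial a N = Csum (map a (Zrange N)).
Proof. unfold Cpartial, Zrange. rewrite map_map. reflexivity. Qed.

Definition abs_partial (a : Z -> CC) (N : nat) : R := Rsum (map (fun j => Cnorm (a j)) (Zrange N)).

Definition abs_summable (a : Z -> CC) : Prop := exists M, forall N, (abs_partial a N <= M)%R.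

Lemma Cpartial_S a N :
  Cpartial a (S N) = a (- Z.of_nat (S N))%Z + Cpartial a N + a (Z.of_nat (S N)).
Proof.
  rewrite !Cpartial_Zrange, Zrange_S. cbn [map Csum]. rewrite map_app, Csum_app. cbn. ring.
Qed.

Lemma abs_partial_S a N : abs_partial a (S N) =
  (Cnorm (a (- Z.of_nat (S N))%Z) + abs_partial a N + Cnorm (a (Z.of_nat (S N))))%R.
Proof.
  unfold abs_partial. rewrite Zrange_S, map_cons, Rsum_cons, map_app, Rsum_app. cbn [map].
  change (Rsum [?c]) with (c + 0)%R. ring.
Qed.

Lemma abs_partial_ge0 a N : (0 <= abs_partial a N)%R.
Proof. apply Rsum_map_nonneg. intros; apply Cnorm_ge0. Qed.

Lemma abs_partial_mono a N M : (N <= M)%nat -> (abs_partial a N <= abs_partial a M)%R.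
Proof.
  induction 1 as [|M _ IH]; [lra|]. rewrite abs_partial_S.
  pose proof (Cnorm_ge0 (a (- Z.of_nat (S M))%Z)). pose proof (Cnorm_ge0 (a (Z.of_nat (S M)))). lra.
Qed.

Lemma Cnorm_Cpartial_diff a N M : (N <= M)%nat ->
  (Cnorm (Cpartial a M - Cpartial a N)%CC <= abs_partial a M - abs_partial a N)%R.
Proof.
  induction 1 as [|M _ IH].
  - replace (Cpartial a N - Cpartial a N) with C0 by ring.
    unfold Cnorm, C0, CR; cbn. rewrite Rabs_R0. lra.
  - rewrite Cpartial_S, abs_partial_S.
    set (x := a (- Z.of_nat (S M))%Z). set (y := a (Z.of_nat (S M))).
    replace (x + Cpartial a M + y - Cpartial a N) with (x + y + (Cpartial a M - Cpartial a N))
      by ring.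
    pose proof (Cnorm_add (x + y) (Cpartial a M - Cpartial a N)). pose proof (Cnorm_add x y). lra.
Qed.

Lemma Cnorm_Cpartial_dist a n m :
  (Cnorm (Cpartial a n - Cpartial a m)%CC <= Rabs (abs_partial a n - abs_partial a m))%R.
Proof.
  destruct (le_ge_dec n m) as [Hnm|Hnm].
  - rewrite Cnorm_sub_sym, Rabs_minus_sym, Rabs_right
      by (pose proof (abs_partial_mono a n m Hnm); lra).
    apply Cnorm_Cpartial_diff; exact Hnm.
  - rewrite Rabs_right by (pose proof (abs_partial_mono a m n Hnm); lra).
    apply Cnorm_Cpartial_diff; exact Hnm.
Qed.

Lemma abs_partial_cv a : abs_summable a -> { Ra : R | Un_cv (abs_partial a) Ra }.
Proof.
  intros Hs. apply growing_cv.
  - intros n. apply abs_partial_mono. lia.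
  - destruct Hs as [M HM]. exists M. intros x [n ->]. apply HM.
Defined.

Lemma Cauchy_crit_dominated (u w : nat -> R) :
  (forall n m, Rabs (u n - u m) <= Rabs (w n - w m))%R -> Cauchy_crit w -> Cauchy_crit u.
Proof.
  intros Hd Hw e He. destruct (Hw e He) as [N HN]. exists N. intros n m Hn Hm.
  specialize (HN n m Hn Hm). specialize (Hd n m). unfold R_dist in *. lra.
Qed.

Lemma abs_summable_Ccv a : abs_summable a -> Ccv (Cpartial a) (CsumZ a).
Proof.
  intros Hs. unfold CsumZ. apply epsilon_spec.
  destruct (abs_partial_cv a Hs) as [Ra HRa].
  pose proof (CV_Cauchy _ (exist _ Ra HRa)) as HC.
  assert (Cre : Cauchy_crit (fun n => re (Cpartial a n))).
  { apply (Cauchy_crit_dominated _ _ (fun n m => Rle_trans _ _ _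
      (Cnorm_re (Cpartial a n - Cpartial a m)) (Cnorm_Cpartial_dist a n m)) HC). }
  assert (Cim : Cauchy_crit (fun n => im (Cpartial a n))).
  { apply (Cauchy_crit_dominated _ _ (fun n m => Rle_trans _ _ _
      (Cnorm_im (Cpartial a n - Cpartial a m)) (Cnorm_Cpartial_dist a n m)) HC). }
  destruct (R_complete _ Cre) as [lr Hr], (R_complete _ Cim) as [li Hi].
  exists (mkC lr li). split; assumption.
Qed.

Definition Ccv_norm (u : nat -> CC) (l : CC) : Prop :=
  forall e, (0 < e)%R -> exists N, forall n, (N <= n)%nat -> (Cnorm (u n - l)%CC <= e)%R.

Lemma Ccv_norm_of_Ccv u l : Ccv u l -> Ccv_norm u l.
Proof.
  intros [Hr Hi] e He. destruct (Hr (e/2)%R ltac:(lra)) as [N1 H1].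
  destruct (Hi (e/2)%R ltac:(lra)) as [N2 H2]. exists (N1 + N2)%nat. intros n Hn.
  specialize (H1 n ltac:(lia)). specialize (H2 n ltac:(lia)). unfold R_dist in *.
  unfold Cnorm, Csub, Cadd, Copp; cbn [re im]. unfold Rminus in H1, H2. lra.
Qed.

Lemma Ccv_norm_CsumZ a : abs_summable a -> Ccv_norm (Cpartial a) (CsumZ a).
Proof. intros Ha. apply Ccv_norm_of_Ccv, abs_summable_Ccv, Ha. Qed.

Lemma Ccv_norm_sub u w a b : Ccv_norm u a -> Ccv_norm w b -> Ccv_norm (fun n => u n - w n) (a - b).
Proof.
  intros Hu Hw e He.
  destruct (Hu (e/2)%R ltac:(lra)) as [N1 H1], (Hw (e/2)%R ltac:(lra)) as [N2 H2].
  exists (N1 + N2)%nat. intros n Hn. specialize (H1 n ltac:(lia)). specialize (H2 n ltac:(lia)).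
  replace (u n - w n - (a - b)) with ((u n - a) - (w n - b)) by ring.
  pose proof (Cnorm_sub (u n - a) (w n - b)). lra.
Qed.

Lemma Ccv_norm_mul u w a b : Ccv_norm u a -> Ccv_norm w b -> Ccv_norm (fun n => u n * w n) (a * b).
Proof.
  intros Hu Hw e He.
  set (K := (Cnorm a + Cnorm b + 1)%R).
  assert (HK : (0 < K)%R) by (unfold K; pose proof (Cnorm_ge0 a); pose proof (Cnorm_ge0 b); lra).
  set (d := Rmin 1 (e / (2 * K))).
  assert (Hd : (0 < d)%R) by (unfold d; apply Rmin_pos; [lra|apply Rdiv_lt_0_compat; lra]).
  assert (Hd1 : (d <= 1)%R) by apply Rmin_l.
  assert (HdK : (d * K <= e / 2)%R).
  { replace (e / 2)%R with (e / (2 * K) * K)%R by (field; lra).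
    apply Rmult_le_compat_r; [lra | apply Rmin_r]. }
  destruct (Hu d Hd) as [N1 H1], (Hw d Hd) as [N2 H2].
  exists (N1 + N2)%nat. intros n Hn.
  specialize (H1 n ltac:(lia)). specialize (H2 n ltac:(lia)).
  replace (u n * w n - a * b) with ((u n - a) * w n + a * (w n - b)) by ring.
  pose proof (Cnorm_add ((u n - a) * w n) (a * (w n - b))).
  pose proof (Cnorm_mul (u n - a) (w n)). pose proof (Cnorm_mul a (w n - b)).
  assert (Hwn : (Cnorm (w n) <= Cnorm b + 1)%R).
  { replace (w n) with ((w n - b) + b) by ring. pose proof (Cnorm_add (w n - b) b). lra. }
  pose proof (Cnorm_ge0 (u n - a)). pose proof (Cnorm_ge0 (w n)).
  pose proof (Cnorm_ge0 a). pose proof (Cnorm_ge0 b).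
  assert (Cnorm (u n - a)%CC * Cnorm (w n) <= d * K)%R
    by (apply Rle_trans with (d * (Cnorm b + 1))%R; [apply Rmult_le_compat | unfold K; nra]; lra).
  assert (Cnorm a * Cnorm (w n - b)%CC <= d * K)%R
    by (apply Rle_trans with (Cnorm a * d)%R; [apply Rmult_le_compat_l | unfold K; nra]; lra).
  lra.
Qed.

Definition Zbox (N : nat) : list (Z * Z) := list_prod (Zrange N) (Zrange N).

Lemma in_Zbox N j l :
  In (j, l) (Zbox N) <-> (- Z.of_nat N <= j <= Z.of_nat N /\ - Z.of_nat N <= l <= Z.of_nat N)%Z.
Proof. unfold Zbox. rewrite in_prod_iff, !in_Zrange. tauto. Qed.

Lemma NoDup_list_prod {A B} (l1 : list A) (l2 : list B) :
  NoDup l1 -> NoDup l2 -> NoDup (list_prod l1 l2).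
Proof.
  induction 1 as [|a l1 Ha Hl1 IH]; intros Hl2; simpl; [constructor|].
  apply NoDup_app; auto.
  - apply Injective_map_NoDup; auto. intros x y E; injection E; auto.
  - intros [x y] Hx Hy. apply in_map_iff in Hx as [z [E _]]. injection E as <- <-.
    apply in_prod_iff in Hy. tauto.
Qed.

Lemma NoDup_Zbox N : NoDup (Zbox N).
Proof. apply NoDup_list_prod; apply NoDup_Zrange. Qed.

Lemma abs_partial_mul_Zbox a b N :
  Rsum (map (fun p => Cnorm (a (fst p)) * Cnorm (b (snd p)))%R (Zbox N)) =
  (abs_partial a N * abs_partial b N)%R.
Proof. apply (Rsum_list_prod (fun j => Cnorm (a j)) (fun j => Cnorm (b j))). Qed.

Lemma Cpartial_mul_Zbox a b N :
  Csum (map (fun p => a (fst p) * b (snd p)) (Zbox N)) = Cpartial a N * Cpartial b N.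
Proof. rewrite !Cpartial_Zrange. apply Csum_list_prod. Qed.

Definition Zpair_eq_dec (p q : Z * Z) : {p = q} + {p <> q}.
Proof. decide equality; apply Z.eq_dec. Defined.

Definition notin (L : list (Z * Z)) (p : Z * Z) : bool :=
  if in_dec Zpair_eq_dec p L then false else true.

Lemma Permutation_incl_split L1 L : NoDup L1 -> NoDup L -> incl L1 L ->
  Permutation L (L1 ++ filter (notin L1) L).
Proof.
  intros H1 H Hi. apply NoDup_Permutation; auto.
  - apply NoDup_app; auto; [apply NoDup_filter; auto|].
    intros p Hp Hq. apply filter_In in Hq. unfold notin in Hq.
    destruct (in_dec _ p L1); [|tauto]. destruct Hq; discriminate.
  - intros p. rewrite in_app_iff, filter_In. unfold notin.
    destruct (in_dec _ p L1); split; intros; try tauto; intuition; try discriminate.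
Qed.

Lemma Rsum_incl_le (w : Z * Z -> R) L1 L2 : (forall p, 0 <= w p)%R ->
  NoDup L1 -> NoDup L2 -> incl L1 L2 -> (Rsum (map w L1) <= Rsum (map w L2))%R.
Proof.
  intros Hw H1 H2 Hi.
  rewrite (Rsum_perm _ _ (Permutation_map w (Permutation_incl_split L1 L2 H1 H2 Hi))),
    map_app, Rsum_app.
  pose proof (Rsum_map_nonneg w (filter (notin L1) L2) Hw). lra.
Qed.

Lemma Cnorm_Csum_between_boxes (T : Z * Z -> CC) (w : Z * Z -> R) L n M :
  (forall p, Cnorm (T p) <= w p)%R -> NoDup L -> incl (Zbox n) L -> incl L (Zbox M) ->
  (Cnorm (Csum (map T L) - Csum (map T (Zbox n)))%CC <=
   Rsum (map w (Zbox M)) - Rsum (map w (Zbox n)))%R.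
Proof.
  intros Hw HL H1 H2.
  assert (Hw0 : forall p, (0 <= w p)%R)
    by (intros p; pose proof (Cnorm_ge0 (T p)); specialize (Hw p); lra).
  pose proof (Permutation_incl_split (Zbox n) L (NoDup_Zbox n) HL H1) as P1.
  pose proof (Permutation_incl_split (Zbox n) (Zbox M) (NoDup_Zbox n) (NoDup_Zbox M)
    (fun p Hp => H2 p (H1 p Hp))) as P2.
  rewrite (Csum_perm _ _ (Permutation_map T P1)), (Rsum_perm _ _ (Permutation_map w P2)),
    !map_app, Csum_app, Rsum_app.
  set (Rest := filter (notin (Zbox n)) L).
  replace (Csum (map T (Zbox n)) + Csum (map T Rest) - Csum (map T (Zbox n)))
    with (Csum (map T Rest)) by ring.
  pose proof (Cnorm_Csum_le T w Rest Hw).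
  assert (Rsum (map w Rest) <= Rsum (map w (filter (notin (Zbox n)) (Zbox M))))%R.
  { apply Rsum_incl_le; auto; try (apply NoDup_filter; auto; apply NoDup_Zbox).
    intros p Hp. apply filter_In in Hp as [Hp Hq]. apply filter_In. auto. }
  lra.
Qed.

Lemma Csum_box_product_approx a b : abs_summable a -> abs_summable b ->
  forall e, (0 < e)%R -> exists n0, forall n L M, (n0 <= n)%nat -> NoDup L ->
    incl (Zbox n) L -> incl L (Zbox M) ->
    (Cnorm (Csum (map (fun p => a (fst p) * b (snd p)) L) - CsumZ a * CsumZ b)%CC <= e)%R.
Proof.
  intros Ha Hb e He.
  destruct (abs_partial_cv a Ha) as [Ra HRa], (abs_partial_cv b Hb) as [Rb HRb].
  assert (Ia : forall M, (abs_partial a M <= Ra)%R)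
    by (apply growing_ineq; [intros n; apply abs_partial_mono; lia | exact HRa]).
  assert (Ib : forall M, (abs_partial b M <= Rb)%R)
    by (apply growing_ineq; [intros n; apply abs_partial_mono; lia | exact HRb]).
  destruct (CV_mult _ _ _ _ HRa HRb (e / 2)%R ltac:(lra)) as [n1 Hn1].
  destruct (Ccv_norm_mul _ _ _ _ (Ccv_norm_CsumZ a Ha) (Ccv_norm_CsumZ b Hb) (e / 2)%R ltac:(lra))
    as [n2 Hn2].
  exists (n1 + n2)%nat. intros n L M Hn HL H1 H2.
  pose proof (Cnorm_Csum_between_boxes (fun p => a (fst p) * b (snd p))
    (fun p => Cnorm (a (fst p)) * Cnorm (b (snd p)))%R L n M
    (fun p => Cnorm_mul _ _) HL H1 H2) as S.
  rewrite !abs_partial_mul_Zbox, Cpartial_mul_Zbox in S.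
  specialize (Hn1 n ltac:(lia)). specialize (Hn2 n ltac:(lia)). unfold R_dist in Hn1.
  pose proof (abs_partial_ge0 a M). pose proof (abs_partial_ge0 b M).
  pose proof (Ia M). pose proof (Ib M).
  assert (abs_partial a M * abs_partial b M <= Ra * Rb)%R by (apply Rmult_le_compat; lra).
  rewrite Rabs_minus_sym in Hn1. pose proof (Rle_abs (Ra * Rb - abs_partial a n * abs_partial b n)).
  set (X := Csum (map (fun p => a (fst p) * b (snd p)) L)) in *.
  set (P := Cpartial a n * Cpartial b n) in *.
  replace (X - CsumZ a * CsumZ b) with ((X - P) + (P - CsumZ a * CsumZ b)) by ring.
  pose proof (Cnorm_add (X - P) (P - CsumZ a * CsumZ b)). lra.
Qed.

Lemma CsumZ_mul_exhaustion a b (L : nat -> list (Z * Z)) (M : nat -> nat) (u : nat -> CC) l :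
  abs_summable a -> abs_summable b -> (forall n, NoDup (L n)) ->
  (forall n, incl (Zbox n) (L n)) -> (forall n, incl (L n) (Zbox (M n))) ->
  (forall n, Csum (map (fun p => a (fst p) * b (snd p)) (L n)) = u n) ->
  Ccv_norm u l -> CsumZ a * CsumZ b = l.
Proof.
  intros Ha Hb HL H1 H2 Hu Hl. apply Csub_eq0, Cnorm_small_eq0. intros e He.
  destruct (Csum_box_product_approx a b Ha Hb (e / 2) ltac:(lra)) as [n0 Hn0].
  destruct (Hl (e / 2)%R ltac:(lra)) as [n1 Hn1].
  set (n := (n0 + n1)%nat).
  specialize (Hn0 n (L n) (M n) ltac:(lia) (HL n) (H1 n) (H2 n)).
  specialize (Hn1 n ltac:(lia)). rewrite Hu in Hn0.
  replace (CsumZ a * CsumZ b - l) with ((u n - l) - (u n - CsumZ a * CsumZ b)) by ring.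
  pose proof (Cnorm_sub (u n - l) (u n - CsumZ a * CsumZ b)). lra.
Qed.

Lemma exp_le x y : (x <= y)%R -> (exp x <= exp y)%R.
Proof.
  intros H. destruct (Rle_lt_or_eq_dec _ _ H); [left; apply exp_increasing; auto | subst; lra].
Qed.

Lemma quadratic_le_affine t c x : (0 < t)%R ->
  (- t * x * x + c * x <= (c + 1) * (c + 1) / (4 * t) - x)%R.
Proof.
  intros Ht. apply (Rmult_le_reg_l (4 * t)); [lra|].
  replace (4 * t * ((c + 1) * (c + 1) / (4 * t) - x))%R with ((c + 1) * (c + 1) - 4 * t * x)%R
    by (field; lra).
  pose proof (Rle_0_sqr (2 * t * x - (c + 1))) as Hsq. unfold Rsqr in Hsq. nra.
Qed.

(* The partial sums are bounded by the geometric series [C (1 + 2 / (e - 1))]. *)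
Lemma abs_summable_exp_decay (a : Z -> CC) C :
  (forall j, Cnorm (a j) <= C * exp (- Rabs (IZR j)))%R -> abs_summable a.
Proof.
  intros Hb.
  assert (HC : (0 <= C)%R).
  { specialize (Hb 0%Z). rewrite Rabs_R0, Ropp_0, exp_0 in Hb.
    pose proof (Cnorm_ge0 (a 0%Z)). lra. }
  assert (He1 : (1 < exp 1)%R) by (rewrite <- exp_0 at 1; apply exp_increasing; lra).
  set (B := fun N : nat => (C * (1 + 2 * (1 - exp (- INR N)) / (exp 1 - 1)))%R).
  assert (HB : forall N, (abs_partial a N <= B N)%R).
  { induction N as [|N IH].
    - unfold abs_partial, B, Rsum. cbn. rewrite Ropp_0, exp_0, Rplus_0_r.
      specialize (Hb 0%Z). rewrite Rabs_R0, Ropp_0, exp_0 in Hb.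
      replace (C * (1 + 2 * (1 - 1) / (exp 1 - 1)))%R with (C * 1)%R by (field; lra). exact Hb.
    - rewrite abs_partial_S.
      pose proof (Hb (- Z.of_nat (S N))%Z) as Hm. pose proof (Hb (Z.of_nat (S N))) as Hp.
      rewrite opp_IZR, Rabs_Ropp in Hm.
      rewrite <- INR_IZR_INZ, Rabs_right in Hm, Hp by (apply Rle_ge, pos_INR).
      unfold B in *. rewrite S_INR in *.
      replace (exp (- INR N)) with (exp (- (INR N + 1)) * exp 1)%R in IH
        by (rewrite <- exp_plus; f_equal; ring).
      set (q := exp (- (INR N + 1))) in *.
      replace (C * (1 + 2 * (1 - q) / (exp 1 - 1)))%R with
        (C * (1 + 2 * (1 - q * exp 1) / (exp 1 - 1)) + 2 * C * q)%R by (field; lra).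
      lra. }
  exists (C * (1 + 2 / (exp 1 - 1)))%R. intros N. eapply Rle_trans; [apply HB|]. unfold B.
  apply Rmult_le_compat_l; auto. apply Rplus_le_compat_l. unfold Rdiv.
  apply Rmult_le_compat_r; [left; apply Rinv_0_lt_compat; lra|].
  pose proof (exp_pos (- INR N)). lra.
Qed.

Lemma gauss_abs_summable (a : Z -> CC) K t c : (0 < t)%R ->
  (forall j, Cnorm (a j) <= K * exp (- t * IZR j * IZR j + c * Rabs (IZR j)))%R -> abs_summable a.
Proof.
  intros Ht Hb. set (D := ((c + 1) * (c + 1) / (4 * t))%R).
  apply (abs_summable_exp_decay a (K * exp D)). intros j.
  assert (HK : (0 <= K)%R).
  { specialize (Hb 0%Z). pose proof (Cnorm_ge0 (a 0%Z)).
    pose proof (exp_pos (- t * IZR 0 * IZR 0 + c * Rabs (IZR 0))). nra. }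
  eapply Rle_trans; [apply Hb|]. rewrite (Rmult_assoc K), <- exp_plus.
  apply Rmult_le_compat_l; [exact HK|]. apply exp_le.
  replace (- t * IZR j * IZR j)%R with (- t * Rabs (IZR j) * Rabs (IZR j))%R
    by (rewrite !Rmult_assoc, <- Rabs_mult, Rabs_right; [reflexivity | apply Rle_ge; nra]).
  pose proof (quadratic_le_affine t c (Rabs (IZR j)) Ht). unfold D. lra.
Qed.

Lemma neg_mul_le_abs a b : (- (a * b) <= Rabs a * Rabs b)%R.
Proof. rewrite <- Rabs_mult, <- (Rabs_Ropp (a * b)). apply Rle_abs. Qed.

Lemma Cexp_quadratic_abs_summable (w : Z -> CC) T S u v : (0 < T)%R -> u <> 0%R ->
  (forall j, re (w j) = (- T * (u * IZR j + v) * (u * IZR j + v) - S * (u * IZR j + v))%R) ->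
  abs_summable (fun j => Cexp (w j)).
Proof.
  intros HT Hu Hw.
  apply (gauss_abs_summable _ (2 * exp (Rabs (S * v))) (T * u * u)
    (2 * T * Rabs (u * v) + Rabs (S * u))).
  - assert (0 < u * u)%R by (apply Rsqr_pos_lt; auto). nra.
  - intros j. eapply Rle_trans; [apply Cnorm_Cexp|]. rewrite Rmult_assoc, <- exp_plus.
    apply Rmult_le_compat_l; [lra|]. apply exp_le. rewrite Hw.
    pose proof (neg_mul_le_abs (2 * T * (u * v)) (IZR j)) as H1.
    pose proof (neg_mul_le_abs (S * u) (IZR j)).
    pose proof (neg_mul_le_abs (S * v) 1). rewrite Rabs_R1 in *.
    rewrite !Rabs_mult in *. rewrite (Rabs_right 2), (Rabs_right T) in H1 by lra.
    pose proof (Rle_0_sqr v) as Hv. unfold Rsqr in Hv.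
    assert (0 <= T * v * v)%R by nra. nra.
Qed.

(** * The addition formula for [theta] *)

Definition theta_term (tau z : CC) (j : Z) : CC :=
  let h := CZ j + half in Cexp (CPI * Ci * tau * h * h + CZ 2 * CPI * Ci * h * (z + half)).

Lemma theta_as_CsumZ tau z : theta tau z = - CsumZ (theta_term tau z).
Proof. reflexivity. Qed.

Definition gauss_term (tau : CC) (m : Z) (z : CC) : CC :=
  Cexp (CPI * Ci * tau * half * CZ m * CZ m + CZ 2 * CPI * Ci * CZ m * z).

Definition theta_even (tau z : CC) : CC := CsumZ (fun p => gauss_term tau (2 * p) z).
Definition theta_odd (tau z : CC) : CC := CsumZ (fun p => gauss_term tau (2 * p + 1) z).

Ltac unfold_C := unfold half, Csub, Cadd, Cmul, Copp, CPI, Ci, CZ, CR; cbn [re im].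

Lemma theta_term_abs_summable tau z : (0 < im tau)%R -> abs_summable (theta_term tau z).
Proof.
  intros Ht. apply (Cexp_quadratic_abs_summable _ (PI * im tau) (2 * PI * im z) 1 (1/2)).
  - pose proof PI_RGT_0. nra.
  - lra.
  - intros j. unfold_C. field.
Qed.

Lemma gauss_term_even_abs_summable tau z : (0 < im tau)%R ->
  abs_summable (fun p => gauss_term tau (2 * p) z).
Proof.
  intros Ht. apply (Cexp_quadratic_abs_summable _ (PI * im tau / 2) (2 * PI * im z) 2 0).
  - pose proof PI_RGT_0. apply Rdiv_lt_0_compat; nra.
  - lra.
  - intros j. unfold_C. rewrite mult_IZR. field.
Qed.

Lemma gauss_term_odd_abs_summable tau z : (0 < im tau)%R ->
  abs_summable (fun p => gauss_term tau (2 * p + 1) z).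
Proof.
  intros Ht. apply (Cexp_quadratic_abs_summable _ (PI * im tau / 2) (2 * PI * im z) 2 1).
  - pose proof PI_RGT_0. apply Rdiv_lt_0_compat; nra.
  - lra.
  - intros j. unfold_C. rewrite plus_IZR, mult_IZR. field.
Qed.

Lemma half_eq : half = C1 / CZ 2.
Proof. apply CC_ext; unfold half, Cdiv, Cmul, Cinv, CZ, C1, CR; cbn [re im]; field. Qed.

Lemma CZ2_neq0 : CZ 2 <> C0.
Proof. intros E. apply (f_equal re) in E. unfold CZ, CR, C0 in E; cbn in E. lra. Qed.

Lemma sin_IZR_mul_PI p : sin (IZR p * PI) = 0%R.
Proof. apply sin_eq_0_1. exists p. reflexivity. Qed.

Lemma Cexp_imaginary r : Cexp (mkC 0 r) = mkC (cos r) (sin r).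
Proof. apply CC_ext; unfold Cexp; cbn [re im]; rewrite exp_0; ring. Qed.

Lemma Cexp_2pi_int p : Cexp (CZ 2 * CPI * Ci * CZ p) = C1.
Proof.
  replace (CZ 2 * CPI * Ci * CZ p) with (mkC 0 (2 * (IZR p * PI)))
    by (apply CC_ext; unfold CZ, CPI, Ci, Cmul, CR; cbn [re im]; ring).
  rewrite Cexp_imaginary. apply CC_ext; unfold C1, CR; cbn [re im].
  - rewrite cos_2a_sin, sin_IZR_mul_PI. ring.
  - rewrite sin_2a, sin_IZR_mul_PI. ring.
Qed.

Lemma Cexp_2pi_half_int p : Cexp (CZ 2 * CPI * Ci * (CZ p + half)) = - C1.
Proof.
  replace (CZ 2 * CPI * Ci * (CZ p + half)) with (mkC 0 (2 * (IZR p * PI) + PI))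
    by (apply CC_ext; unfold half, CZ, CPI, Ci, Cmul, Cadd, CR; cbn [re im]; field).
  rewrite Cexp_imaginary. apply CC_ext; unfold C1, Copp, CR; cbn [re im].
  - rewrite neg_cos, cos_2a_sin, sin_IZR_mul_PI. ring.
  - rewrite neg_sin, sin_2a, sin_IZR_mul_PI. ring.
Qed.

(* The index pairs [(p + r, p - r - 1)] and [(p + r, p - r)] cover [Z * Z] exactly once,
   according to the parity of the sum of the two indices. *)
Lemma theta_term_pair_odd tau x y p r :
  theta_term tau (x + y) (p + r) * theta_term tau (x - y) (p - r - 1) =
  gauss_term tau (2 * p) x * gauss_term tau (2 * r + 1) y.
Proof.
  transitivity (gauss_term tau (2 * p) x * gauss_term tau (2 * r + 1) y
    * Cexp (CZ 2 * CPI * Ci * CZ p)).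
  - unfold theta_term, gauss_term. rewrite <- !Cexp_add. f_equal.
    rewrite !CZ_add, !CZ_sub, !CZ_mul, half_eq. field. exact CZ2_neq0.
  - rewrite Cexp_2pi_int. ring.
Qed.

Lemma theta_term_pair_even tau x y p r :
  theta_term tau (x + y) (p + r) * theta_term tau (x - y) (p - r) =
  - (gauss_term tau (2 * p + 1) x * gauss_term tau (2 * r) y).
Proof.
  transitivity (gauss_term tau (2 * p + 1) x * gauss_term tau (2 * r) y
    * Cexp (CZ 2 * CPI * Ci * (CZ p + half))).
  - unfold theta_term, gauss_term. rewrite <- !Cexp_add. f_equal.
    rewrite !CZ_add, !CZ_sub, !CZ_mul, half_eq. field. exact CZ2_neq0.
  - rewrite Cexp_2pi_half_int. ring.
Qed.

Definition pair_odd (q : Z * Z) : Z * Z := ((fst q + snd q)%Z, (fst q - snd q - 1)%Z).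
Definition pair_even (q : Z * Z) : Z * Z := ((fst q + snd q)%Z, (fst q - snd q)%Z).
Definition paired_box (n : nat) : list (Z * Z) := map pair_odd (Zbox n) ++ map pair_even (Zbox n).

Lemma NoDup_paired_box n : NoDup (paired_box n).
Proof.
  unfold paired_box. apply NoDup_app.
  - apply Injective_map_NoDup; [|apply NoDup_Zbox].
    intros [p r] [p' r'] E. injection E; intros. f_equal; lia.
  - apply Injective_map_NoDup; [|apply NoDup_Zbox].
    intros [p r] [p' r'] E. injection E; intros. f_equal; lia.
  - intros q H1 H2. apply in_map_iff in H1 as [[p r] [E1 _]], H2 as [[p' r'] [E2 _]].
    rewrite <- E2 in E1. injection E1; intros. lia.
Qed.

Lemma incl_Zbox_paired_box n : incl (Zbox n) (paired_box n).
Proof.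
  intros [j l] H. apply in_Zbox in H. unfold paired_box. apply in_or_app.
  pose proof (Z.div2_odd (j + l)) as E. destruct (Z.odd (j + l)); cbn [Z.b2z] in E.
  - left. apply in_map_iff. exists ((Z.div2 (j + l) + 1)%Z, (j - Z.div2 (j + l) - 1)%Z).
    split; [unfold pair_odd; cbn; f_equal; lia | apply in_Zbox; lia].
  - right. apply in_map_iff. exists (Z.div2 (j + l), (j - Z.div2 (j + l))%Z).
    split; [unfold pair_even; cbn; f_equal; lia | apply in_Zbox; lia].
Qed.

Lemma incl_paired_box_Zbox n : incl (paired_box n) (Zbox (2 * n + 1)).
Proof.
  intros q H. apply in_app_or in H as [H|H]; apply in_map_iff in H as [[p r] [<- H]];
    apply in_Zbox in H; apply in_Zbox; cbn; lia.
Qed.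

Lemma Csum_paired_box tau x y n :
  Csum (map (fun p => theta_term tau (x + y) (fst p) * theta_term tau (x - y) (snd p))
    (paired_box n)) =
  Cpartial (fun p => gauss_term tau (2 * p) x) n
    * Cpartial (fun p => gauss_term tau (2 * p + 1) y) n -
  Cpartial (fun p => gauss_term tau (2 * p + 1) x) n
    * Cpartial (fun p => gauss_term tau (2 * p) y) n.
Proof.
  unfold paired_box. rewrite map_app, Csum_app, !map_map.
  rewrite (Csum_map_ext_in _
      (fun q => gauss_term tau (2 * fst q) x * gauss_term tau (2 * snd q + 1) y))
    by (intros [p r] _; apply theta_term_pair_odd).
  rewrite (Csum_map_ext_in
      (fun q => theta_term tau (x + y) (fst (pair_even q))
                * theta_term tau (x - y) (snd (pair_even q)))
      (fun q => - (gauss_term tau (2 * fst q + 1) x * gauss_term tau (2 * snd q) y)))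
    by (intros [p r] _; apply theta_term_pair_even).
  rewrite Csum_map_opp,
    (Cpartial_mul_Zbox (fun p => gauss_term tau (2 * p) x) (fun r => gauss_term tau (2 * r + 1) y)),
    (Cpartial_mul_Zbox (fun p => gauss_term tau (2 * p + 1) x) (fun r => gauss_term tau (2 * r) y)).
  ring.
Qed.

Theorem theta_addition tau : (0 < im tau)%R -> forall s d,
  theta tau (s + d) * theta tau (s - d) =
  theta_even tau s * theta_odd tau d - theta_odd tau s * theta_even tau d.
Proof.
  intros Ht s d. rewrite !theta_as_CsumZ.
  replace (- CsumZ (theta_term tau (s + d)) * - CsumZ (theta_term tau (s - d)))
    with (CsumZ (theta_term tau (s + d)) * CsumZ (theta_term tau (s - d))) by ring.
  apply (CsumZ_mul_exhaustion _ _ paired_box (fun n => 2 * n + 1)%nat _ _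
    (theta_term_abs_summable _ _ Ht) (theta_term_abs_summable _ _ Ht)
    NoDup_paired_box incl_Zbox_paired_box incl_paired_box_Zbox (Csum_paired_box tau s d)).
  apply Ccv_norm_sub; apply Ccv_norm_mul; apply Ccv_norm_CsumZ;
    auto using gauss_term_even_abs_summable, gauss_term_odd_abs_summable.
Qed.

Theorem lemma4p2 (tau eta Lam v lam : CC) (f : CC -> CC)
  (Htau : (0 < im tau)%R)
  (Hf : f = theta tau \/ f = sinpi)
  (* genericity: all denominators occurring in the weights are nonzero *)
  (Heta : f (CZ 2 * eta) <> C0)
  (Hlam : forall m : Z, f (lam + CZ 2 * CZ m * eta) <> C0)
  (Hv : forall m : Z, f (eta * Lam - v + CZ 2 * CZ m * eta) <> C0)
  (J : nat) (HJ : (0 < J)%nat) (i1 j1 i2 j2 : nat) (Hj2 : (j2 <= J)%nat)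
  (K : list Z) (HKlen : length K = J) (HK01 : Forall (fun x => x = 0%Z \/ x = 1%Z) K)
  (HKsum : sumZ K = Z.of_nat j2) :
  fusedWK f eta Lam J (Z.of_nat i1) (Z.of_nat j1) (Z.of_nat i2) K v lam =
  Csum (map (fun k : nat =>
     let kz := Z.of_nat k in
     let m := (Z.of_nat i1 + kz - Z.of_nat j2)%Z in
     fusedW f eta Lam j2 (Z.of_nat i1) kz m (Z.of_nat j2) v
        (lam - CZ 2 * eta * CZ (Z.of_nat J - 2 * Z.of_nat j1 - Z.of_nat j2 + 2 * kz))
     * fusedW f eta Lam (J - j2) m (Z.of_nat j1 - kz) (Z.of_nat i2) 0
        (v + CZ 2 * eta * CZ (Z.of_nat j2)) lam)
   (seq 0 (J + 1))).
Proof.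
  destruct Hf as [-> | ->].
  - exact (fusion_identity _ _ _ (theta_addition tau Htau) eta Lam v lam
      Heta Hlam Hv J i1 j1 i2 j2 Hj2 K HKlen HK01 HKsum).
  - exact (fusion_identity _ _ _ sinpi_addition eta Lam v lam
      Heta Hlam Hv J i1 j1 i2 j2 Hj2 K HKlen HK01 HKsum).
Qed.
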